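(* Let $\mathcal{G}$ be a network with non-monitor set $N$ and set of measurement paths $P$, and let $k\ge1$. Let $S'(k):=\{v\in N: v\text{ is }k\text{-identifiable}\}$ and let $S^*(k)$ be a maximum-cardinality $k$-identifiable subset of $N$. Then $S'(k)=S^*(k)$.
   Context: $\mathcal{G}$ is a finite connected undirected graph whose node set is partitioned into monitors $M$ and non-monitors $N$; $P$ is an arbitrary set of measurement paths. A failure set is any $F\subseteq N$; a path fails iff it traverses a node of $F$. $P_F$ is the set of paths in $P$ traversing at least one node of $F$; $F_1,F_2$ are distinguishable iff $P_{F_1}\ne P_{F_2}$. For $S\subseteq N$, $S$ is $k$-identifiable if any two failure sets $F_1,F_2$ with $|F_1|,|F_2|\le k$ and $F_1\cap S\ne F_2\cap S$ are distinguishable; a node $v$ is $k$-identifiable if $\{v\}$ is. *)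

From mathcomp Require Import all_boot.
Set Implicit Arguments. Unset Strict Implicit. Unset Printing Implicit Defensive.

Section Tomography.
Variable T : finType.

Definition simple_graph (e : rel T) : Prop :=
  symmetric e /\ irreflexive e.
Definition connected_graph (e : rel T) : Prop :=
  forall x y : T, connect e x y.

Definition measurement_path (e : rel T) (M : {set T}) (p : seq T) : Prop :=
  match p with
  | [::] => False
  | x :: q => path e x q /\ x \in M /\ last x q \in M
  end.

Definition traverses (F : {set T}) (p : seq T) : bool := has (fun v => v \in F) p.

Definition PF (P : seq (seq T)) (F : {set T}) : seq (seq T) :=
  [seq p <- P | traverses F p].

Definition distinguishable (P : seq (seq T)) (F1 F2 : {set T}) : Prop :=
  PF P F1 <> PF P F2.

Definition k_identifiable (N : {set T}) (P : seq (seq T)) (k : nat)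
    (S : {set T}) : Prop :=
  forall F1 F2 : {set T}, F1 \subset N -> F2 \subset N ->
    #|F1| <= k -> #|F2| <= k -> F1 :&: S != F2 :&: S ->
    distinguishable P F1 F2.

Definition node_k_identifiable N P k (v : T) : Prop :=
  k_identifiable N P k [set v].

End Tomography.

From mathcomp Require Import all_boot.

(* Two failure sets that differ on S differ on a single node of S, so a set
   is k-identifiable as soon as all its nodes are.  Hence the k-identifiable
   nodes form a k-identifiable set containing every k-identifiable set, which
   is therefore the unique one of maximum size. *)

Section Identifiability.
Variables (T : finType) (N : {set T}) (P : seq (seq T)) (k : nat).

Lemma k_identifiable_sub (A B : {set T}) :
  A \subset B -> k_identifiable N P k B -> k_identifiable N P k A.
Proof.
move=> sAB idB F1 F2 sF1N sF2N cF1 cF2 neqA; apply: idB => //.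
apply: contra neqA => /eqP eqB.
by rewrite -(setIidPr sAB) !setIA eqB.
Qed.

Lemma setI_neq_witness (F1 F2 S : {set T}) :
  F1 :&: S != F2 :&: S -> exists2 v, v \in S & F1 :&: [set v] != F2 :&: [set v].
Proof.
move=> neqS; have [v neq_v] : exists v, (v \in F1 :&: S) != (v \in F2 :&: S).
  apply/existsP; apply: contraT; rewrite negb_exists => /forallP eq_all.
  by case/negP: neqS; apply/eqP/setP => v; apply/eqP/negPn/eq_all.
have vS : v \in S by move: neq_v; rewrite !inE; case: (v \in S); rewrite ?andbF.
exists v => //; apply: contra neq_v => /eqP/setP/(_ v).
by rewrite !inE eqxx vS !andbT => ->.
Qed.

Lemma k_identifiable_nodes (S : {set T}) :
  (forall v, v \in S -> node_k_identifiable N P k v) -> k_identifiable N P k S.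
Proof.
move=> idS F1 F2 sF1N sF2N cF1 cF2 /setI_neq_witness[v vS neq_v].
exact: (idS v vS).
Qed.

End Identifiability.

Theorem proposition2 (T : finType) (e : rel T) (M N : {set T})
    (P : seq (seq T)) (k : nat)
    (Sprime Sstar : {set T}) :
  simple_graph e -> connected_graph e ->
  M :&: N = set0 -> M :|: N = setT ->
  (forall p, p \in P -> measurement_path e M p) ->
  1 <= k ->
  (forall v, v \in Sprime <-> (v \in N /\ node_k_identifiable N P k v)) ->
  Sstar \subset N -> k_identifiable N P k Sstar ->
  (forall S : {set T}, S \subset N -> k_identifiable N P k S -> #|S| <= #|Sstar|) ->
  Sprime = Sstar.
Proof.
move=> _ _ _ _ _ _ defSprime sSstarN idSstar maxSstar.
have sSstarSprime : Sstar \subset Sprime.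
  apply/subsetP => v vSstar; apply/defSprime; split; first exact: (subsetP sSstarN).
  by apply: k_identifiable_sub idSstar; rewrite sub1set.
have sSprimeN : Sprime \subset N by apply/subsetP => v /defSprime[].
have idSprime : k_identifiable N P k Sprime.
  by apply: k_identifiable_nodes => v /defSprime[].
by apply/eqP; rewrite eq_sym eqEcard sSstarSprime maxSstar.
Qed.
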